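(* In the setting below, every $p\in X$, written $p=\sum_{e_i\in S_p}\lambda_ie_i$ (normalized so that $\min_{e_i\in S_p}\lambda_i=1$), satisfies $\lambda_i=1$ for all $e_i\in S_p$ except for at most one index $j$, for which $\lambda_j>1$.
   Context: Setting: $E=\{e_0,\dots,e_n\}\subset\mathbb R^n$ is the vertex set of an $n$-simplex with $e_0+\cdots+e_n=0$, and $X\subset\mathbb R^n\setminus\{0\}$ is a finite set with $E\subseteq X$, no element of $X$ a positive multiple of another, such that every $n+1$ points of $X$ are in good position. (A finite set $A$ is in conical position if $0\notin\operatorname{conv}A$ and no point of $A$ lies in the positive hull—set of nonnegative linear combinations—of the other points; it is in good position otherwise.) For $p\in X$, the support $S_p$ is the minimal subset of $E$ whose positive hull contains $p$; then $p=\sum_{e_i\in S_p}\lambda_ie_i$ uniquely with all $\lambda_i>0$. Convention: each $p\in X$ is replaced by the positive multiple for which $\min_{e_i\in S_p}\lambda_i=1$ (this does not affect the hypotheses). *)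

From HB Require Import structures.
From mathcomp Require Import all_boot all_order all_algebra.
Set Implicit Arguments. Unset Strict Implicit. Unset Printing Implicit Defensive.
Import Order.TTheory GRing.Theory Num.Theory.
Local Open Scope ring_scope.

Section Defs.
Variables (R : realFieldType) (n : nat).
Notation V := 'rV[R]_n.

Definition in_pos_hull (A : seq V) (v : V) : Prop :=
  exists c : V -> R, (forall a, a \in A -> 0 <= c a) /\ v = \sum_(a <- undup A) c a *: a.

Definition in_conv (A : seq V) (v : V) : Prop :=
  exists c : V -> R, [/\ forall a, a \in A -> 0 <= c a,
                         \sum_(a <- undup A) c a = 1 &
                         v = \sum_(a <- undup A) c a *: a].

Definition conical_position (A : seq V) : Prop :=
  ~ in_conv A 0 /\ forall a, a \in A -> ~ in_pos_hull [seq b <- A | b != a] a.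

Definition good_position (A : seq V) : Prop := ~ conical_position A.

Definition affinely_independent (e : 'I_n.+1 -> V) : Prop :=
  forall c : 'I_n.+1 -> R, \sum_i c i = 0 -> \sum_i c i *: e i = 0 -> forall i, c i = 0.

Definition in_pos_hull_idx (e : 'I_n.+1 -> V) (S : {set 'I_n.+1}) (v : V) : Prop :=
  exists c : 'I_n.+1 -> R, (forall i, i \in S -> 0 <= c i) /\ v = \sum_(i in S) c i *: e i.

Definition is_support (e : 'I_n.+1 -> V) (S : {set 'I_n.+1}) (p : V) : Prop :=
  in_pos_hull_idx e S p /\ forall S' : {set 'I_n.+1}, S' \proper S -> ~ in_pos_hull_idx e S' p.

End Defs.

From HB Require Import structures.
From mathcomp Require Import all_boot all_order all_algebra.
From mathcomp Require Import lra.
Import Order.TTheory GRing.Theory Num.Theory.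
Local Open Scope ring_scope.

(* Proof of Proposition 6.1.  Let e_0, ..., e_n be an n-simplex centred at 0.
   Its only linear relations are the multiples of e_0 + ... + e_n = 0, so
   coefficient vectors representing the same point differ by a constant
   ([coef_diff_const]); every claim below reduces to this fact.
   Suppose a point p of X with support S and coefficients lam has two distinct
   indices j, k whose coefficient exceeds the minimal one lam_m.  Replacing the
   vertex e_m of the simplex by p gives n+1 points
        A = p :: [e_i | i <> m]
   ([cone_family]) which are in conical position ([cone_family_conical]):
   0 is not in conv A (uses j), p is not in the positive hull of the e_i
   (uses that S is not the whole index set, [support_not_full]), and no e_i is
   in the positive hull of the other points (uses j or k, whichever differs
   from i).  As A lies in X this contradicts the good-position hypothesis, and
   the theorem follows after undoing the normalisation factor t. *)

Section SimplexCoordinates.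
Set Implicit Arguments. Unset Strict Implicit.
Variables (R : realFieldType) (n : nat) (e : 'I_n.+1 -> 'rV[R]_n).
Hypothesis e_aff : affinely_independent e.
Hypothesis e_sum0 : \sum_i e i = 0.

Lemma lin_rel_const (f : 'I_n.+1 -> R) :
  \sum_i f i *: e i = 0 -> forall i j, f i = f j.
Proof.
move=> rel_f.
pose a := (\sum_i f i) / n.+1%:R.
have n1_neq0 : n.+1%:R != 0 :> R by rewrite pnatr_eq0.
have sum_shift : \sum_i (f i - a) = 0.
  by rewrite sumrB sumr_const card_ord -mulr_natr divfK // subrr.
have rel_shift : \sum_i (f i - a) *: e i = 0.
  under eq_bigr do rewrite scalerBl.
  by rewrite sumrB -scaler_sumr e_sum0 scaler0 rel_f subr0.
have shift0 := e_aff sum_shift rel_shift.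
by move=> i j; have := shift0 i; have := shift0 j; lra.
Qed.

Lemma coef_diff_const (f g : 'I_n.+1 -> R) :
  \sum_i f i *: e i = \sum_i g i *: e i -> forall i j, f i - g i = f j - g j.
Proof.
move=> eq_fg; apply: lin_rel_const.
under eq_bigr do rewrite scalerBl.
by rewrite sumrB eq_fg subrr.
Qed.

Lemma sum_delta (a : 'I_n.+1) : \sum_i ((i == a)%:R : R) *: e i = e a.
Proof.
rewrite (bigD1 a) //= eqxx scale1r big1 ?addr0 // => i /negbTE ->.
by rewrite scale0r.
Qed.

Lemma vertex_inj : injective e.
Proof.
move=> a b eq_ab; apply/eqP/negP => /negP neq_ab.
have := @coef_diff_const (fun i => (i == a)%:R) (fun i => (i == b)%:R).
rewrite !sum_delta => /(_ eq_ab a b).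
by rewrite !eqxx (negbTE neq_ab) eq_sym (negbTE neq_ab) /=; lra.
Qed.

End SimplexCoordinates.

Lemma gap_weight0 (R : realFieldType) (a b c d : R) :
  a < b -> 0 <= c -> 0 <= d -> c * a = c * b + d -> c = 0.
Proof. by move=> ab c0 d0 eq_c; nra. Qed.

Section ConeFamily.
Set Implicit Arguments. Unset Strict Implicit.
Variables (R : realFieldType) (n : nat) (e : 'I_n.+1 -> 'rV[R]_n).
Hypothesis e_aff : affinely_independent e.
Hypothesis e_sum0 : \sum_i e i = 0.
Let e_inj : injective e := vertex_inj e_aff e_sum0.

Definition cone_family (p : 'rV[R]_n) (r : seq 'I_n.+1) : seq 'rV[R]_n :=
  p :: [seq e i | i <- r].

Lemma sum_vertices (T : nmodType) (r : seq 'I_n.+1) (F : 'rV[R]_n -> T) :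
  uniq r -> \sum_(a <- undup [seq e i | i <- r]) F a = \sum_(i in r) F (e i).
Proof.
by move=> r_uniq; rewrite undup_id ?big_map ?big_uniq ?(map_inj_uniq e_inj).
Qed.

Lemma sum_in_coords (d : 'I_n.+1 -> R) (A : {pred 'I_n.+1}) :
  \sum_(i in A) d i *: e i = \sum_i (if i \in A then d i else 0) *: e i.
Proof.
by rewrite big_mkcond; apply: eq_bigr => i _; case: ifP; rewrite ?scale0r.
Qed.

Section Point.
Variables (p : 'rV[R]_n) (s : 'I_n.+1 -> R).
Hypothesis p_coords : p = \sum_i s i *: e i.
Hypothesis p_not_vertex : forall i, p != e i.

Lemma cone_family_uniq (r : seq 'I_n.+1) : uniq r -> uniq (cone_family p r).
Proof.
move=> r_uniq; rewrite /= (map_inj_uniq e_inj) r_uniq andbT.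
by apply/mapP => -[i _ /eqP]; apply/negP.
Qed.

Lemma sum_cone_family (T : nmodType) (r : seq 'I_n.+1) (F : 'rV[R]_n -> T) :
  uniq r -> \sum_(a <- undup (cone_family p r)) F a = F p + \sum_(i in r) F (e i).
Proof.
by move=> r_uniq; rewrite undup_id ?cone_family_uniq // big_cons big_map big_uniq.
Qed.

Lemma cone_family_drop_point (r : seq 'I_n.+1) :
  [seq b <- cone_family p r | b != p] = [seq e i | i <- r].
Proof.
rewrite /= eqxx /=; apply/all_filterP/allP => _ /mapP [i _ ->].
by rewrite eq_sym p_not_vertex.
Qed.

Lemma cone_family_drop_vertex (r : seq 'I_n.+1) (i : 'I_n.+1) :
  [seq b <- cone_family p r | b != e i] = cone_family p [seq l <- r | l != i].
Proof.
rewrite /= p_not_vertex filter_map; congr (_ :: map _ _); apply: eq_filter => l.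
by rewrite /= (inj_eq e_inj).
Qed.

Lemma cone_comb_coords (c : R) (d : 'I_n.+1 -> R) (r : seq 'I_n.+1) :
  c *: p + \sum_(i in r) d i *: e i =
  \sum_i (c * s i + (if i \in r then d i else 0)) *: e i.
Proof.
under [RHS]eq_bigr do rewrite scalerDl -scalerA.
by rewrite big_split /= -scaler_sumr -p_coords sum_in_coords.
Qed.

End Point.
End ConeFamily.

Section ReplacedVertex.
Set Implicit Arguments. Unset Strict Implicit.
Variables (R : realFieldType) (n : nat) (e : 'I_n.+1 -> 'rV[R]_n).
Hypothesis e_aff : affinely_independent e.
Hypothesis e_sum0 : \sum_i e i = 0.

Variables (p : 'rV[R]_n) (S : {set 'I_n.+1}) (lam : 'I_n.+1 -> R).
Variables (m j k : 'I_n.+1).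
Hypothesis p_supp : is_support e S p.
Hypothesis lam_pos : forall i, i \in S -> 0 < lam i.
Hypothesis p_eq : p = \sum_(i in S) lam i *: e i.
Hypothesis mS : m \in S.
Hypothesis lam_min : forall i, i \in S -> lam m <= lam i.
Hypotheses (jS : j \in S) (kS : k \in S) (neq_jk : j != k).
Hypotheses (lam_mj : lam m < lam j) (lam_mk : lam m < lam k).

Let s (i : 'I_n.+1) : R := if i \in S then lam i else 0.
(* The vertices kept when e_m is replaced by p. *)
Let r : seq 'I_n.+1 := enum (predC1 m).

Let r_uniq : uniq r := enum_uniq _.

Lemma mem_r (i : 'I_n.+1) : (i \in r) = (i != m).
Proof. by rewrite mem_enum. Qed.

Lemma p_full_coords : p = \sum_i s i *: e i.
Proof. by rewrite p_eq sum_in_coords. Qed.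

(* If S were everything, subtracting lam_m (e_0 + ... + e_n) = 0 would express
   p over S \ {m}, against the minimality of the support. *)
Lemma support_not_full : exists i0, i0 \notin S.
Proof.
case: (pickP (fun i => i \notin S)) => [i0 i0S | S_full]; first by exists i0.
have inS i : i \in S by have := S_full i => /negbFE.
exfalso; apply: (p_supp.2 (S :\ m)); first exact: properD1.
exists (fun i => lam i - lam m); split.
  by move=> i; rewrite in_setD1 => /andP [_ iS]; rewrite subr_ge0 lam_min.
have sum_others : \sum_(i | i != m) e i = - e m.
  by apply/eqP; move/eqP: e_sum0; rewrite (bigD1 m) //= addrC addr_eq0.
rewrite (eq_bigl (predC1 m)) => [|i]; last by rewrite in_setD1 inS andbT.
under [RHS]eq_bigr do rewrite scalerBl.
rewrite sumrB -scaler_sumr sum_others scalerN opprK p_eq (bigD1 m) //= addrC.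
by congr (_ + _); apply: eq_bigl => i; rewrite inS.
Qed.

Lemma above_min_neq (l : 'I_n.+1) : lam m < lam l -> l != m.
Proof. by apply: contraTneq => ->; rewrite ltxx. Qed.

(* p is none of the vertices: a vertex of S would be a smaller support, and
   a vertex outside S gives incompatible coordinates. *)
Lemma point_not_vertex (i : 'I_n.+1) : p != e i.
Proof.
apply/eqP => p_ei.
have diff := coef_diff_const e_aff e_sum0 (f := s) (g := fun l => (l == i)%:R).
rewrite sum_delta -p_full_coords in diff.
case: (boolP (i \in S)) => iS.
- apply: (p_supp.2 [set i]); last first.
    by exists (fun=> 1); split => //; rewrite big_set1 scale1r.
  rewrite properEneq sub1set iS andbT; apply/eqP => S1.
  by move: mS jS (above_min_neq lam_mj); rewrite -S1 !inE => /eqP -> /eqP ->; rewrite eqxx.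
- have im : (m == i) = false by apply/negbTE; apply: contraNneq iS => <-.
  have := diff p_ei i m; rewrite /s (negbTE iS) mS eqxx im /=.
  by have := lam_pos mS; lra.
Qed.

(* 0 is not a convex combination of p and the e_i, i <> m: comparing the
   coordinates at m and j kills the weight of p, then all other weights. *)
Lemma zero_notin_conv : ~ in_conv (cone_family e p r) 0.
Proof.
move=> [c [c_ge0 c_sum1 c_comb]].
rewrite (sum_cone_family e_aff e_sum0 point_not_vertex) // in c_sum1.
rewrite (sum_cone_family e_aff e_sum0 point_not_vertex) // in c_comb.
rewrite (cone_comb_coords p_full_coords) in c_comb.
have const := lin_rel_const e_aff e_sum0 (esym c_comb).
have jm := above_min_neq lam_mj.
have cp0 : c p = 0.
  apply: (gap_weight0 lam_mj (c_ge0 p (mem_head _ _)) (c_ge0 (e j) _)).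
    by rewrite inE map_f ?orbT // mem_r.
  by have := const m j; rewrite /s mS jS !mem_r eqxx jm addr0.
move: c_sum1; rewrite cp0 big1 ?add0r => [|i]; first by move/eqP; rewrite eq_sym oner_eq0.
by rewrite mem_r => im; have := const i m; rewrite /s cp0 !mul0r !mem_r im eqxx /= !add0r.
Qed.

(* p is not in the positive hull of the e_i, i <> m: its coordinate lam_m > 0
   at m would equal minus a nonnegative weight at an index outside S. *)
Lemma point_notin_pos_hull : ~ in_pos_hull [seq e i | i <- r] p.
Proof.
move=> [c [c_ge0 c_comb]].
rewrite (sum_vertices e_aff e_sum0) // sum_in_coords p_full_coords in c_comb.
have [i0 i0S] := support_not_full.
have i0m : i0 != m by apply: contraNneq i0S => ->.
have := coef_diff_const e_aff e_sum0 c_comb m i0.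
rewrite /s mS (negbTE i0S) !mem_r eqxx i0m /= subr0 sub0r.
have := c_ge0 (e i0); rewrite map_f ?mem_r // => /(_ isT).
by have := lam_pos mS; lra.
Qed.

(* No e_i, i <> m, is in the positive hull of p and the other e_l, l <> m:
   an index l of S other than m and i with lam_l > lam_m (j or k) kills the
   weight of p, and then the coordinate at i reads 1 = 0. *)
Lemma vertex_notin_pos_hull (i : 'I_n.+1) :
  i != m -> ~ in_pos_hull [seq b <- cone_family e p r | b != e i] (e i).
Proof.
move=> im [c [c_ge0 c_comb]].
rewrite (cone_family_drop_vertex e_aff e_sum0 point_not_vertex) in c_comb c_ge0.
set r' := [seq l <- r | l != i] in c_comb c_ge0.
have r'_uniq : uniq r' by rewrite filter_uniq.
have mem_r' l : (l \in r') = (l != i) && (l != m) by rewrite mem_filter mem_r.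
rewrite (sum_cone_family e_aff e_sum0 point_not_vertex) // in c_comb.
rewrite (cone_comb_coords p_full_coords) -{1}(sum_delta e i) in c_comb.
have const := coef_diff_const e_aff e_sum0 c_comb.
have mi : (m == i) = false by rewrite eq_sym (negbTE im).
have [l [lS lm li lam_ml]] : exists l, [/\ l \in S, l != m, l != i & lam m < lam l].
  have [ji | ji] := eqVneq j i; [exists k | exists j]; split => //;
    by rewrite ?above_min_neq // -?ji 1?eq_sym.
have cp0 : c p = 0.
  apply: (gap_weight0 lam_ml (c_ge0 p (mem_head _ _)) (c_ge0 (e l) _)).
    by rewrite inE map_f ?orbT // mem_r' li lm.
  have := const l m; rewrite /s lS mS !mem_r' li lm eqxx (negbTE li) mi.
  by rewrite /= !sub0r addr0 => /oppr_inj ->.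
have := const i m; rewrite /s !mem_r' cp0 !eqxx mi /= !mul0r !add0r.
by rewrite subr0 oppr0 => /eqP; rewrite oner_eq0.
Qed.

Lemma cone_family_conical : conical_position (cone_family e p r).
Proof.
split; first exact: zero_notin_conv.
move=> a; rewrite inE => /orP [/eqP -> | /mapP [i ir ->]].
  by rewrite (cone_family_drop_point point_not_vertex); exact: point_notin_pos_hull.
by apply: vertex_notin_pos_hull; rewrite -mem_r.
Qed.

End ReplacedVertex.

(* If two indices j <> k had t * lam > 1, the cone family replacing e_m by p
   would be n+1 points of X in conical position. *)
Theorem proposition6p1 (R : realFieldType) (n : nat)
  (e : 'I_n.+1 -> 'rV[R]_n) (X : seq 'rV[R]_n) :
  affinely_independent e ->
  \sum_i e i = 0 ->
  (forall i, e i \in X) ->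
  0 \notin X ->
  (forall p q, p \in X -> q \in X -> forall t : R, 0 < t -> p = t *: q -> p = q) ->
  (forall A : seq 'rV[R]_n, uniq A -> size A = n.+1 -> {subset A <= X} ->
     good_position A) ->
  forall p, p \in X ->
  forall (S : {set 'I_n.+1}) (lam : 'I_n.+1 -> R),
    is_support e S p ->
    (forall i, i \in S -> 0 < lam i) ->
    p = \sum_(i in S) lam i *: e i ->
  (* normalization: t is the positive factor making min_{i in S} t*lam_i = 1 *)
  forall t : R, 0 < t ->
    (forall i, i \in S -> 1 <= t * lam i) ->
    (exists2 i, i \in S & t * lam i = 1) ->
  exists2 j, j \in S &
    forall i, i \in S -> i != j -> t * lam i = 1.
Proof.
move=> e_aff e_sum0 e_X _ _ X_good p pX S lam p_supp lam_pos p_eq t t_pos t_ge1.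
move=> [m mS lam_m1].
have lam_min i : i \in S -> lam m <= lam i.
  by move=> iS; rewrite -(ler_pM2l t_pos) lam_m1 t_ge1.
have above_min i : i \in S -> t * lam i != 1 -> lam m < lam i.
  by move=> iS ti; rewrite -(ltr_pM2l t_pos) lam_m1 lt_neqAle eq_sym ti t_ge1.
case: (boolP [exists j, (j \in S) && (t * lam j != 1)]); last first.
  by move=> /existsPn all1; exists m => // i iS _; move: (all1 i); rewrite iS negbK => /eqP.
move=> /existsP [j /andP [jS tj]]; exists j => // k kS kj.
have [// | tk] := eqVneq (t * lam k) 1; exfalso.
have lam_mj := above_min j jS tj; have lam_mk := above_min k kS tk.
have p_not_vertex := point_not_vertex e_aff e_sum0 p_supp lam_pos p_eq mS jS lam_mj.
apply: (X_good (cone_family e p (enum (predC1 m)))).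
- exact: (cone_family_uniq e_aff e_sum0 p_not_vertex (enum_uniq _)).
- by rewrite /= size_map -cardE cardC1 card_ord.
- by move=> a; rewrite inE => /orP [/eqP -> | /mapP [i _ ->]].
- apply: (cone_family_conical e_aff e_sum0 p_supp lam_pos p_eq mS lam_min jS kS _ lam_mj lam_mk).
  by rewrite eq_sym.
Qed.
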